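(* Let $s,t$ be integers with $s\ge t\ge 2$, and let $c\ge s$ be a real number such that for every real $w>1$ and every graph $G$ with $\alpha(G)<s$ and $\omega(G)\le w$ we have $|G|< cw^{s-1}/(\log w)^{s-2}$. If $G$ is a $K_{s,t}$-free graph and $w>1$ is a real number with $w\ge \omega(G)$, then $$|G|\le \frac{c\,\alpha(G)^t w^{s-1}}{(\log w)^{s-2}}.$$
   Context: All graphs are finite and simple; $|G|$ is the number of vertices, $\alpha(G)$ the maximum size of a stable set and $\omega(G)$ the maximum size of a clique in $G$. A graph is $K_{s,t}$-free if it has no induced subgraph isomorphic to the complete bipartite graph $K_{s,t}$. Logarithms are to base two. *)

From HB Require Import structures.
From mathcomp Require Import all_boot all_order all_algebra.
From mathcomp Require Import reals exp.
Set Implicit Arguments. Unset Strict Implicit. Unset Printing Implicit Defensive.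
Import Order.TTheory GRing.Theory Num.Theory.

Definition simple_graph (T : finType) (e : rel T) : Prop :=
  symmetric e /\ irreflexive e.

Definition stable_set (T : finType) (e : rel T) (A : {set T}) : bool :=
  [forall x in A, forall y in A, ~~ e x y].

Definition clique (T : finType) (e : rel T) (A : {set T}) : bool :=
  [forall x in A, forall y in A, (x != y) ==> e x y].

Definition alpha (T : finType) (e : rel T) : nat :=
  \max_(A : {set T} | stable_set e A) #|A|.

Definition omega (T : finType) (e : rel T) : nat :=
  \max_(A : {set T} | clique e A) #|A|.

Definition has_induced_Kst (T : finType) (e : rel T) (s t : nat) : Prop :=
  exists A B : {set T},
    [/\ #|A| = s, #|B| = t, [disjoint A & B],
        stable_set e A /\ stable_set e B &
        forall x y, x \in A -> y \in B -> e x y].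

Definition Kst_free (T : finType) (e : rel T) (s t : nat) : Prop :=
  ~ has_induced_Kst e s t.

Local Open Scope ring_scope.
Definition log2 (R : realType) (x : R) : R := ln x / ln 2.

From HB Require Import structures.
From mathcomp Require Import all_boot all_order all_algebra.
From mathcomp Require Import reals exp.
From mathcomp Require Import zify.
Set Implicit Arguments. Unset Strict Implicit. Unset Printing Implicit Defensive.
Import Order.TTheory GRing.Theory Num.Theory.

(* Fix a maximum stable set I and label every vertex x by at most t vertices
   of its closed neighbourhood in I, which is nonempty by maximality; there are
   at most |I|^t = alpha^t labels.  A stable set S of vertices sharing a label Q
   has fewer than s elements: if |Q| < t, every vertex of S has closed
   neighbourhood exactly Q in I, so (I \ Q) u S is stable and |S| <= |Q| < s;
   if |Q| = t, then S avoids I (as t >= 2) and is complete to Q, so |S| >= s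
   would give an induced K_{s,t}.  Hence each label class spans a graph with
   alpha < s and omega <= w, and has fewer than c w^(s-1)/(log w)^(s-2)
   vertices. *)

Lemma card_small_subsets (T : finType) (I : {set T}) (t : nat) :
  #|[set Q : {set T} | [&& Q \subset I, 0 < #|Q| & #|Q| <= t]]| <= #|I| ^ t.
Proof.
rewrite -[X in _ ^ X](card_ord t) -card_ffun_on.
apply: leq_trans (leq_imset_card (fun f : {ffun 'I_t -> T} => f @: 'I_t) _).
(* Each such [Q] is the range of a map ['I_t -> I]. *)
apply/subset_leq_card/subsetP => Q; rewrite inE => /and3P[QI /card_gt0P[x0 Qx0] Qt].
have nthQ i : nth x0 (enum Q) i \in Q.
  rewrite -mem_enum; case: (ltnP i (size (enum Q))) => [/mem_nth //|/(nth_default x0) ->].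
  by rewrite mem_enum.
apply/imsetP; exists [ffun i : 'I_t => nth x0 (enum Q) i].
  by apply/ffun_onP => i; rewrite ffunE (subsetP QI).
apply/setP => y; apply/idP/imsetP => [Qy | [i _ ->]]; last by rewrite ffunE.
have ylt : index y (enum Q) < t by rewrite (leq_trans _ Qt) // cardE index_mem mem_enum.
by exists (Ordinal ylt); rewrite // ffunE nth_index ?mem_enum.
Qed.

Definition take_set (T : finType) (n : nat) (A : {set T}) : {set T} :=
  [set x in take n (enum A)].

Lemma take_set_sub (T : finType) n (A : {set T}) : take_set n A \subset A.
Proof. by apply/subsetP => x; rewrite inE => /mem_take; rewrite mem_enum. Qed.

Lemma card_take_set (T : finType) n (A : {set T}) : #|take_set n A| = minn n #|A|.
Proof.
rewrite cardsE (card_uniqP _) ?take_uniq ?enum_uniq // size_take -cardE.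
by case: ltnP => h; lia.
Qed.

Lemma take_set_id (T : finType) n (A : {set T}) : #|A| <= n -> take_set n A = A.
Proof. by move=> h; apply/eqP; rewrite eqEcard take_set_sub card_take_set; lia. Qed.

Section StableSets.

Variables (T : finType) (e : rel T).

Lemma stableP (A : {set T}) :
  reflect (forall x y, x \in A -> y \in A -> ~~ e x y) (stable_set e A).
Proof.
apply: (iffP forall_inP) => H.
- by move=> x y xA yA; exact: (forall_inP (H x xA) y yA).
- by move=> x xA; apply/forall_inP => y yA; exact: H.
Qed.

Lemma cliqueP (A : {set T}) :
  reflect (forall x y, x \in A -> y \in A -> x != y -> e x y) (clique e A).
Proof.
apply: (iffP forall_inP) => H.
- by move=> x y xA yA; exact/implyP/(forall_inP (H x xA) y yA).
- by move=> x xA; apply/forall_inP => y yA; apply/implyP; exact: H.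
Qed.

Lemma stable_set_nadj (A : {set T}) x y :
  stable_set e A -> x \in A -> y \in A -> ~~ e x y.
Proof. by move=> /stableP; apply. Qed.

Lemma stable_set0 : stable_set e set0.
Proof. by apply/stableP => x y; rewrite inE. Qed.

Lemma stable_setS (A B : {set T}) : A \subset B -> stable_set e B -> stable_set e A.
Proof.
move=> /subsetP AB /stableP stB; apply/stableP => x y xA yA.
by apply: stB; apply: AB.
Qed.

Lemma leq_card_alpha (A : {set T}) : stable_set e A -> #|A| <= alpha e.
Proof. exact: (@leq_bigmax_cond _ (stable_set e) (fun A => #|A|)). Qed.

Lemma maximum_stable_set : exists2 I, stable_set e I & #|I| = alpha e.
Proof.
have : 0 < #|stable_set e| by apply/card_gt0P; exists set0; exact: stable_set0.
by case/(eq_bigmax_cond (fun A : {set T} => #|A|)) => I; exists I.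
Qed.

End StableSets.

Section Induced.

Variables (T : finType) (e : rel T).

Definition induced (X : {set T}) : rel {x | x \in X} := fun u v => e (val u) (val v).
Arguments induced X : clear implicits.

Lemma omega_induced (X : {set T}) : omega (induced X) <= omega e.
Proof.
apply/bigmax_leqP => A /cliqueP clA; rewrite -(card_imset _ val_inj).
apply: leq_bigmax_cond; apply/cliqueP => _ _ /imsetP[u uA ->] /imsetP[v vA ->] uv.
by apply: clA => //; apply: contraNneq uv => ->.
Qed.

Lemma alpha_induced_lt (X : {set T}) (s : nat) :
  (forall S : {set T}, S \subset X -> stable_set e S -> #|S| < s) ->
  alpha (induced X) < s.
Proof.
move=> small; have := small set0 (sub0set X) (@stable_set0 _ e); rewrite cards0.
case: s small => // s small _; apply/bigmax_leqP => A /stableP stA.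
rewrite -ltnS -(card_imset _ val_inj); apply: small.
- by apply/subsetP => _ /imsetP[u _ ->]; exact: valP.
- by apply/stableP => _ _ /imsetP[u uA ->] /imsetP[v vA ->]; exact: stA.
Qed.

Lemma induced_simple (X : {set T}) : simple_graph e -> simple_graph (induced X).
Proof. by case=> esym eirr; split=> [u v|u]; [exact: esym | exact: eirr]. Qed.

End Induced.

Lemma Kst_free_card_lt (T : finType) (e : rel T) (s t : nat) (S Q : {set T}) :
  Kst_free e s t -> stable_set e S -> stable_set e Q -> #|Q| = t -> [disjoint S & Q] ->
  (forall x y, x \in S -> y \in Q -> e x y) -> #|S| < s.
Proof.
move=> free stS stQ cardQ dSQ SQ; rewrite ltnNge; apply/negP => sS.
have sub := take_set_sub s S.
apply: free; exists (take_set s S), Q; split => //.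
- by rewrite card_take_set; lia.
- exact: disjointWl dSQ.
- by split=> //; exact: stable_setS stS.
- by move=> x y /(subsetP sub) xS; exact: SQ.
Qed.

Local Open Scope ring_scope.

Definition small_alpha_bound (R : numDomainType) (s : nat) (w B : R) : Prop :=
  forall (T : finType) (e : rel T), simple_graph e ->
    (alpha e < s)%N -> (omega e)%:R <= w -> #|T|%:R < B.

Lemma small_alpha_bound_subset (R : numDomainType) (s : nat) (w B : R)
    (T : finType) (e : rel T) (X : {set T}) :
  small_alpha_bound s w B -> simple_graph e -> (omega e)%:R <= w ->
  (forall S : {set T}, S \subset X -> stable_set e S -> (#|S| < s)%N) ->
  #|X|%:R < B.
Proof.
move=> bound simple om small.
have <- : #|{: {x | x \in X}}| = #|X| by rewrite card_sig; exact: eq_card.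
apply: bound (induced_simple X simple) (alpha_induced_lt small) _.
by rewrite (le_trans _ om) // ler_nat omega_induced.
Qed.

Lemma card_le_image_mul (R : numDomainType) (T U : finType) (f : T -> U) (B : R) :
  (forall y, #|[set x | f x == y]|%:R <= B) -> #|T|%:R <= #|f @: T|%:R * B.
Proof.
move=> fibre.
have -> : #|T| = (\sum_(y in f @: T) #|[set x | f x == y]|)%N.
  rewrite -sum1_card (partition_big f (mem (f @: T))) => [|x _]; last exact: imset_f.
  by apply: eq_bigr => y _; rewrite sum1dep_card cardsE.
by rewrite natr_sum mulr_natl -sumr_const; apply: ler_sum.
Qed.

Section MaximumStableSet.

Variables (T : finType) (e : rel T).
Hypotheses (esym : symmetric e) (eirr : irreflexive e).
Variable I : {set T}.
Hypotheses (stI : stable_set e I) (cardI : #|I| = alpha e).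

Definition trace (x : T) : {set T} := [set y in I | (y == x) || e x y].

Lemma trace_sub x : trace x \subset I.
Proof. by apply/subsetP => y; rewrite inE => /andP[]. Qed.

Lemma trace_stable x : x \in I -> trace x = [set x].
Proof.
move=> xI; apply/setP => y; rewrite !inE; apply/andP/eqP => [[yI /orP[/eqP //|exy]]|->].
  by have := stable_set_nadj stI xI yI; rewrite exy.
by rewrite xI eqxx.
Qed.

Lemma trace_neq0 x : (0 < #|trace x|)%N.
Proof.
apply/card_gt0P; case: (boolP [exists y in I, e x y]) => [/exists_inP[y yI exy] | none].
  by exists y; rewrite inE yI exy orbT.
exists x; rewrite inE eqxx andbT; apply: contraT => xI.
suff /leq_card_alpha : stable_set e (x |: I) by rewrite cardsU1 xI cardI ltnn.
apply/stableP => u v; rewrite !inE => /predU1P[->|uI] /predU1P[->|vI].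
- by rewrite eirr.
- by apply: contra none => exv; apply/exists_inP; exists v.
- by rewrite esym; apply: contra none => exu; apply/exists_inP; exists u.
- exact: stable_set_nadj stI uI vI.
Qed.

Lemma card_stable_le_trace (S Q : {set T}) :
  stable_set e S -> (forall x, x \in S -> trace x \subset Q) -> (#|S| <= #|Q|)%N.
Proof.
move=> stS SQ.
have nadj x y : x \in S -> y \in I :\: Q -> (y != x) && ~~ e x y.
  move=> xS /setDP[yI yQ]; apply: contraNT yQ => adj.
  by apply: (subsetP (SQ x xS)); rewrite inE yI negb_and !negbK in adj *.
have disj : [disjoint I :\: Q & S].
  apply/pred0P => y /=; apply/negP => /andP[yIQ yS].
  by move: (nadj y y yS yIQ); rewrite eqxx.
have stU : stable_set e ((I :\: Q) :|: S).
  apply/stableP => u v; rewrite !in_setU => /orP[uIQ|uS] /orP[vIQ|vS].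
  - by case/setDP: uIQ vIQ => uI _ /setDP[vI _]; exact: stable_set_nadj stI uI vI.
  - by rewrite esym; case/andP: (nadj v u vS uIQ).
  - by case/andP: (nadj u v uS vIQ).
  - exact: stable_set_nadj stS uS vS.
have := leq_card_alpha stU.
rewrite cardsU (disjoint_setI0 disj) cards0 subn0 -cardI cardsD.
by have := subset_leq_card (subsetIl I Q); have := subset_leq_card (subsetIr I Q); lia.
Qed.

End MaximumStableSet.

Section Labels.

Variables (T : finType) (e : rel T) (t : nat).
Hypotheses (esym : symmetric e) (eirr : irreflexive e).
Variable I : {set T}.
Hypotheses (stI : stable_set e I) (cardI : #|I| = alpha e).

Definition label (x : T) : {set T} := take_set t (trace e I x).

Lemma label_small x :
  (0 < t)%N -> label x \in [set Q : {set T} | [&& Q \subset I, 0 < #|Q| & #|Q| <= t]%N].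
Proof.
move=> t_gt0; rewrite inE (subset_trans (take_set_sub _ _) (trace_sub _ _ _)).
rewrite card_take_set /=.
by have := trace_neq0 esym eirr stI cardI x; lia.
Qed.

Variable s : nat.
Hypotheses (t_ge2 : (2 <= t)%N) (t_le_s : (t <= s)%N) (free : Kst_free e s t).

Lemma label_fibre_stable_lt (Q S : {set T}) :
  S \subset [set x | label x == Q] -> stable_set e S -> (#|S| < s)%N.
Proof.
move=> /subsetP SQ stS.
have labelS x : x \in S -> label x = Q by move=> /SQ; rewrite inE => /eqP.
have cardQ x : x \in S -> #|Q| = minn t #|trace e I x|.
  by move=> xS; rewrite -(labelS x xS) card_take_set.
have [Qlt | Qge] := ltnP #|Q| t.
  apply: (leq_ltn_trans _ (leq_trans Qlt t_le_s)).
  apply: (card_stable_le_trace esym stI cardI stS) => x xS.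
  by rewrite -(labelS x xS) /label take_set_id //; have := cardQ x xS; lia.
have [-> | [x0 x0S]] := set_0Vmem S; first by rewrite cards0; lia.
have QI : Q \subset I.
  by rewrite -(labelS x0 x0S) (subset_trans (take_set_sub _ _) (trace_sub _ _ _)).
have notI x : x \in S -> x \notin I.
  by move=> xS; apply/negP => xI; have := cardQ x xS; rewrite trace_stable // cards1; lia.
apply: Kst_free_card_lt free stS (stable_setS QI stI) _ _ _.
- by have := cardQ x0 x0S; lia.
- rewrite disjoints_subset; apply/subsetP => x xS; rewrite inE.
  by apply: contra (notI x xS); exact: (subsetP QI).
- move=> x y xS yQ; have := subsetP (take_set_sub t (trace e I x)) y.
  rewrite -/(label x) labelS // inE => /(_ yQ) /andP[yI /orP[/eqP yx | //]].
  by move: (notI x xS); rewrite -yx yI.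
Qed.

End Labels.

Lemma card_Kst_free_le (R : numDomainType) (T : finType) (e : rel T) (s t : nat)
    (w B : R) :
  simple_graph e -> (2 <= t)%N -> (t <= s)%N -> Kst_free e s t ->
  small_alpha_bound s w B -> (omega e)%:R <= w -> #|T|%:R <= (alpha e ^ t)%:R * B.
Proof.
move=> simple t_ge2 t_le_s free bound om; have [esym eirr] := simple.
have [I stI cardI] := maximum_stable_set e.
have fibre_lt Q : #|[set x | label e t I x == Q]|%:R < B.
  apply: small_alpha_bound_subset bound simple om _ => S SQ stS.
  exact: (label_fibre_stable_lt esym stI cardI t_ge2 t_le_s free SQ stS).
have B_ge0 : 0 <= B.
  have /ltW : #|@set0 T|%:R < B.
    apply: small_alpha_bound_subset bound simple om _ => S.
    by rewrite subset0 => /eqP -> _; rewrite cards0; lia.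
  by rewrite cards0.
apply: le_trans (card_le_image_mul (fun Q => ltW (fibre_lt Q))) _.
rewrite ler_wpM2r // ler_nat -cardI; apply: leq_trans (card_small_subsets I t).
apply/subset_leq_card/subsetP => _ /imsetP[x _ ->].
by apply: (label_small esym eirr stI cardI); lia.
Qed.

Theorem mainTheorem5 (R : realType) (s t : nat) (c : R)
  (hts : (2 <= t)%N) (hst : (t <= s)%N) (hcs : s%:R <= c)
  (hc : forall (w : R), 1 < w ->
        forall (T : finType) (e : rel T), simple_graph e ->
        (alpha e < s)%N -> (omega e)%:R <= w ->
        #|T|%:R < c * w ^+ (s - 1) / (log2 w) ^+ (s - 2))
  (T : finType) (e : rel T) (hG : simple_graph e) (hfree : Kst_free e s t)
  (w : R) (hw : 1 < w) (hom : (omega e)%:R <= w) :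
  #|T|%:R <= c * (alpha e)%:R ^+ t * w ^+ (s - 1) / (log2 w) ^+ (s - 2).
Proof.
have bound : small_alpha_bound s w (c * w ^+ (s - 1) / (log2 w) ^+ (s - 2)) := hc w hw.
have := card_Kst_free_le hG hts hst hfree bound hom.
by rewrite natrX !mulrA (mulrC _ c).
Qed.
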